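(* Fix an integer $n\ge1$. Then $x\mapsto\psi(x;n)$ is non-decreasing on $\mathbb Z_{\ge0}$; for all $x\in\mathbb Z_{\ge0}$ one has $\mathfrak p^n_1(x,x+1)\ge\frac12\ge\mathfrak p^n_1(x,x-1)$; and $x\mapsto\mathfrak p^n_1(x,x+1)$ is non-increasing while $x\mapsto\mathfrak p^n_1(x,x-1)$ is non-decreasing.
   Context: Let $p_n(w)$ be the probability that simple symmetric random walk on $\mathbb Z$ started at $0$ is at $w$ at time $n$. For $x,y\in\mathbb Z_{\ge0}$ set $p^{(1/2)}_n(x,y)=p_n(x-y)-p_n(x+y+2)$ (and $p^{(1/2)}_n(x,-1)=0$), $\psi(x;n)=\sum_{y\ge0}p^{(1/2)}_n(x,y)$, and for $0\le n\le N$, $\mathfrak p^N_n(x,y)=p^{(1/2)}_n(x,y)\,\psi(y;N-n)/\psi(x;N)$. Thus $\mathfrak p^n_1(x,x\pm1)$ are the one-step transition probabilities at time $0$ of simple random walk of length $n$ conditioned to stay non-negative. *)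

From HB Require Import structures.
From mathcomp Require Import all_boot all_order all_algebra.
Set Implicit Arguments. Unset Strict Implicit. Unset Printing Implicit Defensive.
Import Order.TTheory GRing.Theory Num.Theory.
Local Open Scope ring_scope.

(* p_n(w): probability that SSRW on Z started at 0 is at w at time n,
   given by the Chapman-Kolmogorov recursion of the walk. *)
Fixpoint srw (n : nat) (w : int) : rat :=
  match n with
  | 0%N => (w == 0)%:R
  | m.+1 => (srw m (w - 1) + srw m (w + 1)) / 2%:R
  end.

(* p^{(1/2)}_n(x,y) = p_n(x-y) - p_n(x+y+2); note at y = -1 this is 0. *)
Definition phalf (n : nat) (x y : int) : rat := srw n (x - y) - srw n (x + y + 2).

(* psi(x;n) = sum_{y>=0} p^{(1/2)}_n(x,y); the summand vanishes for y > |x|+n,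
   so the series is the finite sum below. *)
Definition psi (x : int) (n : nat) : rat :=
  \sum_(0 <= y < (`|x| + n).+1) phalf n x (y%:Z).

Definition frakp (N n : nat) (x y : int) : rat :=
  phalf n x y * psi y (N - n) / psi x N.

From HB Require Import structures.
From mathcomp Require Import all_boot all_order all_algebra zify ring lra.
Set Implicit Arguments. Unset Strict Implicit. Unset Printing Implicit Defensive.
Import Order.TTheory GRing.Theory Num.Theory.
Local Open Scope ring_scope.

(* Extended by psi(-1; m) = 0, the map x |-> psi(x; m) on x >= -1 solves the
   discrete heat equation psi(x; m+1) = (psi(x-1; m) + psi(x+1; m)) / 2 with
   absorbing boundary at -1 and initial data 1.  A heat step preserves both
   monotonicity and concavity in x, so every psi(.; m) is non-decreasing and
   concave; being non-negative it is log-concave, whence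
   psi(x-1; m) psi(x+2; m) <= psi(x; m) psi(x+1; m).  Finally
   p^n_1(x, x+-1) = psi(x+-1; n-1) / (psi(x-1; n-1) + psi(x+1; n-1)), so the
   bounds by 1/2 follow from monotonicity and the monotonicity in x from the
   four-term inequality. *)

Section RealFieldInequalities.
Variable R : realFieldType.
Implicit Types a b c d s t : R.

Lemma mulr_le_sqr_mid a b c : 0 <= a -> 0 <= c -> a + c <= b *+ 2 ->
  a * c <= b ^+ 2.
Proof.
move=> a_ge0 c_ge0; rewrite mulr2n => acb.
have amgm : 0 <= (a - c) ^+ 2 by apply: sqr_ge0.
rewrite !expr2 in amgm *; nra.
Qed.

Lemma mulr_outer_le_inner a b c d : 0 <= a -> 0 < b -> 0 < c -> 0 <= d ->
  a * c <= b ^+ 2 -> b * d <= c ^+ 2 -> a * d <= b * c.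
Proof.
move=> a_ge0 b_gt0 c_gt0 d_ge0 abc bcd.
have bc_gt0 : 0 < b * c by rewrite mulr_gt0.
rewrite -(ler_pM2r bc_gt0).
have -> : a * d * (b * c) = (a * c) * (b * d) by ring.
have -> : b * c * (b * c) = b ^+ 2 * c ^+ 2 by ring.
by apply: ler_pM; rewrite // mulr_ge0 // ltW.
Qed.

Lemma ler_divDr s t (s' t' : R) : 0 < s + t -> 0 < s' + t' ->
  t * s' <= t' * s -> t / (s + t) <= t' / (s' + t').
Proof.
move=> st_gt0 st'_gt0 h; rewrite ler_pdivrMr // mulrAC ler_pdivlMr //.
by rewrite !mulrDr [t' * t]mulrC lerD2r.
Qed.

Lemma ler_divDl s t (s' t' : R) : 0 < s + t -> 0 < s' + t' ->
  s * t' <= s' * t -> s / (s + t) <= s' / (s' + t').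
Proof. by rewrite ![_ + t]addrC ![s' + _]addrC; apply: ler_divDr. Qed.

Lemma half_le_divDr s t : 0 < s + t -> s <= t -> 2%:R^-1 <= t / (s + t).
Proof. by move=> st_gt0 st; rewrite ler_pdivlMr //; lra. Qed.

Lemma divDr_le_half s t : 0 < s + t -> s <= t -> s / (s + t) <= 2%:R^-1.
Proof. by move=> st_gt0 st; rewrite ler_pdivrMr //; lra. Qed.

End RealFieldInequalities.

Section AbsorbedHeatEquation.
Variable R : realFieldType.
Variable u : nat -> nat -> R.
Hypothesis u_boundary : forall m, u m 0 = 0.
Hypothesis u_init : forall k, u 0 k.+1 = 1.
Hypothesis u_step : forall m k, u m.+1 k.+1 = (u m k + u m k.+2) / 2%:R.

Lemma heat_nondecreasing m : {homo u m : i j / (i <= j)%N >-> i <= j}.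
Proof.
apply: homo_leq lexx le_trans _; elim: m => [|m IH] [|k].
- by rewrite u_boundary u_init.
- by rewrite !u_init.
- have u_ge0 : 0 <= u m 2.
    by rewrite -(u_boundary m); apply: homo_leq lexx le_trans IH _ _ _.
  by rewrite u_step !u_boundary add0r divr_ge0.
- by rewrite !u_step ler_pM2r ?invr_gt0 // lerD.
Qed.

Lemma heat_ge0 m k : 0 <= u m k.
Proof. by rewrite -(u_boundary m); apply: heat_nondecreasing. Qed.

Lemma heat_gt0 m k : 0 < u m k.+1.
Proof.
elim: m k => [|m IH] k; first by rewrite u_init.
by rewrite u_step divr_gt0 // ltr_wpDl ?heat_ge0.
Qed.

Lemma heat_concave m k : u m k.+2 - u m k.+1 <= u m k.+1 - u m k.
Proof.
elim: m k => [|m IH] [|k].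
- by rewrite u_boundary !u_init; lra.
- by rewrite !u_init; lra.
- by rewrite !u_step !u_boundary; have := IH 1%N; lra.
- by rewrite !u_step; have := IH k; have := IH k.+2; lra.
Qed.

Lemma heat_log_concave m k : u m k * u m k.+2 <= u m k.+1 ^+ 2.
Proof.
apply: mulr_le_sqr_mid; rewrite ?heat_ge0 //.
by have := heat_concave m k; lra.
Qed.

Lemma heat_outer_le_inner m k : u m k * u m k.+3 <= u m k.+1 * u m k.+2.
Proof.
by apply: mulr_outer_le_inner; rewrite ?heat_ge0 ?heat_gt0 ?heat_log_concave.
Qed.

End AbsorbedHeatEquation.

Lemma srwN m w : srw m (- w) = srw m w.
Proof.
elim: m w => [|m IH] w /=; first by rewrite oppr_eq0.
by rewrite -opprD (addrC (- w)) -opprB !IH addrC.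
Qed.

Lemma srw_eq0 m w : (m < `|w|)%N -> srw m w = 0.
Proof.
elim: m w => [|m IH] w /= m_lt; first by case: eqP m_lt => // ->.
by rewrite !IH ?addr0 ?mul0r //; lia.
Qed.

Lemma phalf_eq0 m x (y : nat) : (`|x| + m < y)%N -> phalf m x y%:Z = 0.
Proof. by move=> y_gt; rewrite /phalf !srw_eq0 ?subr0 //; lia. Qed.

Lemma big_phalf_psi x m K : (`|x| + m < K)%N ->
  \sum_(0 <= y < K) phalf m x y%:Z = psi x m.
Proof.
move=> K_gt; rewrite /psi (big_cat_nat _ (n := (`|x| + m).+1)) //=.
rewrite [X in _ + X]big1_seq ?addr0 // => y /andP[_].
by rewrite mem_index_iota => /andP[y_gt _]; apply: phalf_eq0.
Qed.

Lemma phalfS m x y :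
  phalf m.+1 x y = (phalf m (x - 1) y + phalf m (x + 1) y) / 2%:R.
Proof.
rewrite /phalf /=.
have -> : x - 1 - y = x - y - 1 by ring.
have -> : x + 1 - y = x - y + 1 by ring.
have -> : x - 1 + y + 2 = x + y + 2 - 1 by ring.
have -> : x + 1 + y + 2 = x + y + 2 + 1 by ring.
by field.
Qed.

Lemma psiS x m : psi x m.+1 = (psi (x - 1) m + psi (x + 1) m) / 2%:R.
Proof.
rewrite {1}/psi; under eq_bigr do rewrite phalfS.
by rewrite -big_distrl big_split /= !big_phalf_psi //; lia.
Qed.

Lemma psiN1 m : psi (-1) m = 0.
Proof.
rewrite /psi big1 // => y _; rewrite /phalf -srwN.
have -> : - (-1 - y%:Z) = -1 + y%:Z + 2 by ring.
by rewrite subrr.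
Qed.

Lemma psi0 (x : nat) : psi x%:Z 0 = 1.
Proof.
rewrite /psi addn0 big_nat_recr //= big1_seq => [|y].
  rewrite /phalf /= subrr eqxx add0r.
  have -> : (x%:Z + x%:Z + 2 == 0) = false by apply/negbTE; lia.
  by rewrite subr0.
rewrite mem_index_iota => /andP[_ /andP[_ y_lt]]; rewrite /phalf /=.
have -> : (x%:Z - y%:Z == 0) = false by apply/negbTE; lia.
have -> : (x%:Z + y%:Z + 2 == 0) = false by apply/negbTE; lia.
by rewrite subrr.
Qed.

(* psi_seq m k = psi(k-1; m): the shift puts the absorbing site -1 at index 0. *)
Definition psi_seq (m k : nat) : rat := psi (k%:Z - 1) m.

Lemma psi_seq0 m : psi_seq m 0 = 0.
Proof. by rewrite /psi_seq sub0r psiN1. Qed.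

Lemma psi_seq_init k : psi_seq 0 k.+1 = 1.
Proof. by rewrite /psi_seq (_ : k.+1%:Z - 1 = k%:Z) ?psi0 //; lia. Qed.

Lemma psi_psi_seq m (x : nat) : psi x%:Z m = psi_seq m x.+1.
Proof. by rewrite /psi_seq (_ : x.+1%:Z - 1 = x%:Z) //; lia. Qed.

Lemma psi_seqS m k :
  psi_seq m.+1 k.+1 = (psi_seq m k + psi_seq m k.+2) / 2%:R.
Proof. by rewrite -psi_psi_seq psiS (_ : k%:Z + 1 = k.+2%:Z - 1) //; lia. Qed.

Lemma phalf1_succ (x : nat) : phalf 1 x%:Z (x%:Z + 1) = 2%:R^-1.
Proof.
rewrite /phalf [X in _ - X]srw_eq0; last by lia.
by rewrite (_ : x%:Z - (x%:Z + 1) = -1) ?srwN /=; [lra | ring].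
Qed.

Lemma phalf1_pred (x : nat) : phalf 1 x.+1%:Z x%:Z = 2%:R^-1.
Proof.
rewrite /phalf [X in _ - X]srw_eq0; last by lia.
by rewrite (_ : x.+1%:Z - x%:Z = 1) /=; [lra | lia].
Qed.

Lemma psi_seq_sum_gt0 m x : 0 < psi_seq m x + psi_seq m x.+2.
Proof.
by rewrite ltr_wpDl ?(heat_ge0 psi_seq0 psi_seq_init psi_seqS)
  ?(heat_gt0 psi_seq0 psi_seq_init psi_seqS).
Qed.

Lemma frakp_succ m (x : nat) : frakp m.+1 1 x%:Z (x%:Z + 1) =
  psi_seq m x.+2 / (psi_seq m x + psi_seq m x.+2).
Proof.
rewrite /frakp subn1 /= phalf1_succ (_ : x%:Z + 1 = x.+1%:Z); last by lia.
rewrite !psi_psi_seq psi_seqS.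
by field; rewrite lt0r_neq0 ?psi_seq_sum_gt0.
Qed.

Lemma frakp_pred m (x : nat) : frakp m.+1 1 x%:Z (x%:Z - 1) =
  psi_seq m x / (psi_seq m x + psi_seq m x.+2).
Proof.
rewrite /frakp subn1 /= psi_psi_seq psi_seqS.
case: x => [|x]; first by rewrite psi_seq0 !(mulr0, mul0r).
rewrite (_ : x.+1%:Z - 1 = x%:Z) ?phalf1_pred ?psi_psi_seq; last by lia.
by field; rewrite lt0r_neq0 ?psi_seq_sum_gt0.
Qed.

Theorem lemmaA4 (n : nat) (hn : (1 <= n)%N) :
  (forall x y : nat, (x <= y)%N -> psi x%:Z n <= psi y%:Z n) /\
  (forall x : nat,
     2%:R^-1 <= frakp n 1 x%:Z (x%:Z + 1) /\
     frakp n 1 x%:Z (x%:Z - 1) <= 2%:R^-1) /\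
  (forall x y : nat, (x <= y)%N ->
     frakp n 1 y%:Z (y%:Z + 1) <= frakp n 1 x%:Z (x%:Z + 1)) /\
  (forall x y : nat, (x <= y)%N ->
     frakp n 1 x%:Z (x%:Z - 1) <= frakp n 1 y%:Z (y%:Z - 1)).
Proof.
case: n hn => [//|m] _.
have psi_seq_mono := heat_nondecreasing psi_seq0 psi_seq_init psi_seqS.
have psi_seq_outer := heat_outer_le_inner psi_seq0 psi_seq_init psi_seqS.
split; [|split; [|split]].
- by move=> x y xy; rewrite !psi_psi_seq; apply: psi_seq_mono.
- move=> x; rewrite frakp_succ frakp_pred.
  have ends : psi_seq m x <= psi_seq m x.+2 by apply: psi_seq_mono; rewrite leqW.
  by rewrite half_le_divDr ?divDr_le_half ?psi_seq_sum_gt0.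
- apply: (homo_leq (r := fun a b => b <= a)) => [//||k]; first exact: ge_trans.
  rewrite !frakp_succ ler_divDr ?psi_seq_sum_gt0 //.
  by rewrite mulrC [_ * psi_seq m k.+1]mulrC psi_seq_outer.
- apply: (homo_leq (r := <=%R)) => [//||k]; first exact: le_trans.
  by rewrite !frakp_pred ler_divDl ?psi_seq_sum_gt0 // psi_seq_outer.
Qed.
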